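(* Let $n_1,n_3,n_5>0$ and $\theta_1,\theta_3,\theta_5\in[0,\pi/2)$ satisfy $n_1\sin\theta_1=n_3\sin\theta_3=n_5\sin\theta_5$, and put $c_i=\cos\theta_i/n_i$ for $i=1,3,5$. Let $a_0>0$, $r_2>0$, $r_4>0$, $\tau>0$ and \[ a_1=2\pi c_3\frac{2c_1}{c_1+c_3},\qquad a_2=2\pi c_3\frac{c_1-c_3}{c_1+c_3},\qquad a_5=\frac{2c_5}{c_5+c_3}. \] Define the real $3\times 3$ matrices \[ A=\begin{pmatrix}-a_1r_2&0&a_1a_0\\0&-(a_1-a_2)r_4a_5&0\\0&0&-1\end{pmatrix},\quad B=\begin{pmatrix}0&0&0\\-a_5a_1r_2&0&a_2a_0a_5\\0&-\frac{a_5r_4}{a_0}&0\end{pmatrix}, \] \[ C=\begin{pmatrix}0&0&0\\0&0&0\\-\frac{a_1r_2(a_5-1)}{(a_1-a_2)a_0}&0&\frac{a_2(a_5-1)}{a_1-a_2}\end{pmatrix}, \] and for $\epsilon\ge 0$ let $E(\epsilon)=\mathrm{diag}(1,1,\epsilon)$ and \[ \Delta(\epsilon,s)=sE(\epsilon)-A-Be^{-\tau s}-Ce^{-2\tau s},\qquad s\in\mathbb{C}. \] Let $\sigma(\epsilon)=\{\lambda\in\mathbb{C}:\det\Delta(\epsilon,\lambda)=0\}$. Then for every $\epsilon\ge 0$: (a) $0\in\sigma(\epsilon)$ and $\lambda=0$ is a simple root of $\det\Delta(\epsilon,\lambda)=0$; (b) every $\lambda\in\sigma(\epsilon)\setminus\{0\}$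 satisfies $\Re(\lambda)<0$.
   Context: Here $\Delta(\epsilon,s)$ is the characteristic matrix of the (for $\epsilon>0$ singularly perturbed) linear delay system $\frac{d}{dt}(E(\epsilon)x(t))=Ax(t)+Bx(t-\tau)+Cx(t-2\tau)+h(t)$ in $\mathbb{R}^3$. Note $a_1-a_2=2\pi c_3>0$. *)

From HB Require Import structures.
From mathcomp Require Import all_boot all_order all_algebra.
From mathcomp Require Import all_classical all_reals all_analysis.
From mathcomp Require Import complex.
Set Implicit Arguments. Unset Strict Implicit. Unset Printing Implicit Defensive.
Import Order.TTheory GRing.Theory Num.Theory.
Import numFieldNormedType.Exports.
Import ComplexField.
Local Open Scope ring_scope.
Local Open Scope complex_scope.

Definition cexp {R : realType} (z : R[i]) : R[i] :=
  (expR (complex.Re z))%:C * (cos (complex.Im z) +i* sin (complex.Im z)).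

Definition mx3 {T : nmodType} (x00 x01 x02 x10 x11 x12 x20 x21 x22 : T)
  : 'M[T]_3 :=
  \matrix_(i < 3, j < 3)
    nth 0 (nth [::] [:: [:: x00; x01; x02]; [:: x10; x11; x12];
                        [:: x20; x21; x22]] i) j.

Definition cc {R : realType} (n theta : R) : R := cos theta / n.

Definition a1 {R : realType} (c1 c3 : R) : R :=
  2 * pi * c3 * ((2 * c1) / (c1 + c3)).
Definition a2 {R : realType} (c1 c3 : R) : R :=
  2 * pi * c3 * ((c1 - c3) / (c1 + c3)).
Definition a5 {R : realType} (c3 c5 : R) : R := (2 * c5) / (c5 + c3).

Definition matA {R : realType} (a0 a1 a2 a5 r2 r4 : R) : 'M[R]_3 :=
  mx3 (- (a1 * r2)) 0 (a1 * a0)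
      0 (- ((a1 - a2) * r4 * a5)) 0
      0 0 (-1).
Definition matB {R : realType} (a0 a1 a2 a5 r2 r4 : R) : 'M[R]_3 :=
  mx3 0 0 0
      (- (a5 * a1 * r2)) 0 (a2 * a0 * a5)
      0 (- (a5 * r4 / a0)) 0.
Definition matC {R : realType} (a0 a1 a2 a5 r2 r4 : R) : 'M[R]_3 :=
  mx3 0 0 0
      0 0 0
      (- (a1 * r2 * (a5 - 1) / ((a1 - a2) * a0))) 0 (a2 * (a5 - 1) / (a1 - a2)).

Definition matE {R : realType} (eps : R) : 'M[R]_3 :=
  mx3 1 0 0  0 1 0  0 0 eps.

Definition cmx {R : realType} (M : 'M[R]_3) : 'M[R[i]]_3 := map_mx (fun x => x%:C) M.

Definition Delta {R : realType} (a0 a1 a2 a5 r2 r4 tau eps : R) (s : R[i])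
  : 'M[R[i]]_3 :=
  s *: cmx (matE eps) - cmx (matA a0 a1 a2 a5 r2 r4)
  - cexp (- (tau%:C * s)) *: cmx (matB a0 a1 a2 a5 r2 r4)
  - cexp (- ((2 * tau)%:C * s)) *: cmx (matC a0 a1 a2 a5 r2 r4).

Definition chardet {R : realType} (a0 a1 a2 a5 r2 r4 tau eps : R) (s : R[i])
  : R[i] := \det (Delta a0 a1 a2 a5 r2 r4 tau eps s).

(* Eliminating a0, det Δ(ε, s) = P(s) - Q(s) e^{-2τ s} with
   P(s) = (s + α)(s + β)(ε s + 1) and Q(s) = (α - w s)(β - m s), where
   α = a1 r2 > 0, β = (a1 - a2) r4 a5 > 0, and w = (c1 - c3)/(c1 + c3),
   m = (c5 - c3)/(c5 + c3) lie in (-1, 1).  Hence P(0) = Q(0), and the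
   derivative at 0 is α(1 + m) + β(1 + w) + αβ(ε + 2τ) > 0.
   For Re s >= 0 and s <> 0 one has |α - w s| < |s + α|, |β - m s| < |s + β|,
   |ε s + 1| >= 1 and |e^{-2τ s}| <= 1, so |Q(s) e^{-2τ s}| < |P(s)|.
   Complex differentiability of e^{k s} at 0 follows from the bound
   |e^z - 1 - z| <= 3 |z|^2 for |z| <= 1/2. *)

From HB Require Import structures.
From mathcomp Require Import all_boot all_order all_algebra.
From mathcomp Require Import all_classical all_reals all_analysis.
From mathcomp Require Import complex.
From mathcomp Require Import ring lra.
Set Implicit Arguments. Unset Strict Implicit. Unset Printing Implicit Defensive.
Import Order.TTheory GRing.Theory Num.Theory.
Import numFieldNormedType.Exports.
Import ComplexField.
Local Open Scope classical_set_scope.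
Local Open Scope ring_scope.
Local Open Scope complex_scope.

Lemma det_mx3 (T : comPzRingType) (x00 x01 x02 x10 x11 x12 x20 x21 x22 : T) :
  \det (mx3 x00 x01 x02 x10 x11 x12 x20 x21 x22) =
  x00 * (x11 * x22 - x12 * x21) - x01 * (x10 * x22 - x12 * x20)
  + x02 * (x10 * x21 - x11 * x20).
Proof.
rewrite (expand_det_row _ ord0) !big_ord_recl big_ord0 /cofactor.
rewrite !(expand_det_row _ ord0) !big_ord_recl !big_ord0 /cofactor !det_mx11.
by rewrite !mxE /=; ring.
Qed.

Lemma map_mx3 (T U : nmodType) (f : T -> U)
    (x00 x01 x02 x10 x11 x12 x20 x21 x22 : T) :
  map_mx f (mx3 x00 x01 x02 x10 x11 x12 x20 x21 x22) =
  mx3 (f x00) (f x01) (f x02) (f x10) (f x11) (f x12) (f x20) (f x21) (f x22).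
Proof. by apply/matrixP => -[[|[|[|//]]] ?] [[|[|[|//]]] ?]; rewrite !mxE. Qed.

Lemma scale_mx3 (T : pzRingType) (k x00 x01 x02 x10 x11 x12 x20 x21 x22 : T) :
  k *: mx3 x00 x01 x02 x10 x11 x12 x20 x21 x22 =
  mx3 (k * x00) (k * x01) (k * x02) (k * x10) (k * x11) (k * x12)
      (k * x20) (k * x21) (k * x22).
Proof. by apply/matrixP => -[[|[|[|//]]] ?] [[|[|[|//]]] ?]; rewrite !mxE. Qed.

Lemma sub_mx3 (T : zmodType) (x00 x01 x02 x10 x11 x12 x20 x21 x22
    y00 y01 y02 y10 y11 y12 y20 y21 y22 : T) :
  mx3 x00 x01 x02 x10 x11 x12 x20 x21 x22
  - mx3 y00 y01 y02 y10 y11 y12 y20 y21 y22 =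
  mx3 (x00 - y00) (x01 - y01) (x02 - y02) (x10 - y10) (x11 - y11)
      (x12 - y12) (x20 - y20) (x21 - y21) (x22 - y22).
Proof. by apply/matrixP => -[[|[|[|//]]] ?] [[|[|[|//]]] ?]; rewrite !mxE. Qed.

Section RealBounds.
Variable R : realType.

Lemma ler_norm_sub0_derive (f df : R -> R) (x M : R) :
  (forall y : R, is_derive y (1 : R) f (df y)) ->
  (forall y, `|y| <= `|x| -> `|df y| <= M) ->
  `|f x - f 0| <= M * `|x|.
Proof.
move=> fd dfM.
have fc a b : {within `[a, b], continuous f}.
  by apply: derivable_within_continuous => y _; exact: ex_derive.
have [x0|x0] := lerP 0 x.
- have [c] := MVT_segment x0 (fun y _ => fd y) (fc 0 x).
  rewrite in_itv /= => /andP[c0 cx] ->.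
  rewrite subr0 normrM ler_wpM2r // dfM // !ger0_norm // (le_trans c0).
- have [c] := MVT_segment (ltW x0) (fun y _ => fd y) (fc x 0).
  rewrite in_itv /= => /andP[xc c0] fxE.
  rewrite distrC fxE sub0r normrM normrN ler_wpM2r // dfM //.
  by rewrite !ler0_norm ?(ltW x0) // lerN2.
Qed.

Lemma norm_sin_le (x : R) : `|sin x| <= `|x|.
Proof.
have := @ler_norm_sub0_derive sin cos x 1 (fun y => is_derive_sin y)
  (fun y _ => cos_max y).
by rewrite sin0 subr0 mul1r.
Qed.

Lemma norm_cosB1_le (x : R) : `|cos x - 1| <= x ^+ 2.
Proof.
have := @ler_norm_sub0_derive cos (fun y => - sin y) x `|x|
  (fun y => is_derive_cos y).
rewrite cos0 -expr2 real_normK ?num_real //; apply=> y yx.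
by rewrite normrN (le_trans (norm_sin_le y)).
Qed.

Lemma norm_sinB_le (x : R) : `|x| <= 1 -> `|sin x - x| <= x ^+ 2.
Proof.
move=> x1.
have := @ler_norm_sub0_derive (sin - id) (fun y => cos y - 1) x (x ^+ 2)
  (fun y => is_deriveB (is_derive_sin y) (is_derive_id y 1)).
rewrite !fctE sin0 !subr0 => bound; apply: le_trans (bound _) _.
- move=> y yx; apply: (le_trans (norm_cosB1_le y)).
  rewrite -[y ^+ 2]real_normK ?num_real // -[x ^+ 2]real_normK ?num_real //.
  by rewrite ler_sqr ?nnegrE.
- by rewrite ler_piMr ?sqr_ge0.
Qed.

(* From 1 + a <= e^a and 1 - a <= e^-a, i.e. e^a (1 - a) <= 1. *)
Lemma expR_taylor_bounds (a : R) : `|a| <= 2^-1 ->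
  [/\ expR a <= 2, `|expR a - 1| <= 2 * `|a| & `|expR a - 1 - a| <= 2 * a ^+ 2].
Proof.
rewrite ler_norml => /andP[aN a2].
have lb := expR_ge1Dx a.
have ub : expR a * (1 - a) <= 1.
  by rewrite -[X in _ <= X](expRxMexpNx_1 a) ler_wpM2l ?expR_ge0 // expR_ge1Dx.
have E0 := expR_gt0 a.
have E2 : expR a <= 2 by nra.
split=> //; rewrite ler_norml; apply/andP; split.
- by have [a0|a0] := lerP 0 a; [rewrite ger0_norm | rewrite ltr0_norm]; nra.
- by have [a0|a0] := lerP 0 a; [rewrite ger0_norm | rewrite ltr0_norm]; nra.
- nra.
- have : 0 <= (expR a - 1 - a) * (2^-1 - a) by apply: mulr_ge0; lra.
  nra.
Qed.

End RealBounds.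

Section ComplexBounds.
Variable R : realType.
Implicit Types (z u v : R[i]).

Lemma ler_normc u v :
  complex.Re u ^+ 2 + complex.Im u ^+ 2 <= complex.Re v ^+ 2 + complex.Im v ^+ 2 ->
  `|u| <= `|v|.
Proof. by move=> uv; rewrite !normc_def lecR ler_sqrt // addr_ge0 ?sqr_ge0. Qed.

Lemma ltr_normc u v :
  complex.Re u ^+ 2 + complex.Im u ^+ 2 < complex.Re v ^+ 2 + complex.Im v ^+ 2 ->
  `|u| < `|v|.
Proof.
move=> uv; rewrite !normc_def ltcR ltr_sqrt //.
exact: le_lt_trans (addr_ge0 (sqr_ge0 _) (sqr_ge0 _)) uv.
Qed.

Lemma norm_affine_lt (c w : R) (s : R[i]) : 0 < c -> `|w| < 1 ->
  0 <= complex.Re s -> s != 0 -> `|c%:C - w%:C * s| < `|s + c%:C|.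
Proof.
move=> c0 w1 x0 s0.
have rho0 : 0 < complex.Re s ^+ 2 + complex.Im s ^+ 2.
  by rewrite -ltcR add_Re2_Im2 exprn_gt0 // normr_gt0.
have w2 : 0 < 1 - w ^+ 2.
  by rewrite subr_gt0 -real_normK ?num_real // expr2 mulr_ilt1 ?normr_ge0.
have w3 : 0 <= 1 + w by move: w1; rewrite ltr_norml; lra.
case: s x0 rho0 s0 => x y /= x0 rho0 _; apply: ltr_normc => /=.
(* |s + c|^2 - |c - w s|^2 = (1 - w^2) |s|^2 + 2 c (1 + w) Re s *)
have := mulr_gt0 w2 rho0; have := mulr_ge0 (mulr_ge0 (ltW c0) w3) x0.
nra.
Qed.

Lemma norm_scale_add1_ge1 (k : R) (s : R[i]) : 0 <= k -> 0 <= complex.Re s ->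
  1 <= `|k%:C * s + 1|.
Proof.
case: s => x y /= k0 x0; rewrite -[leLHS]normr1; apply: ler_normc => /=.
by have := mulr_ge0 k0 x0; have := sqr_ge0 (k * y); nra.
Qed.

Lemma cexpD u v : cexp (u + v) = cexp u * cexp v.
Proof.
case: u => a b; case: v => c d.
rewrite /cexp /= expRD cosD sinD.
by apply/eqP; rewrite eq_complex /=; apply/andP; split; apply/eqP; ring.
Qed.

Lemma cexp0 : cexp (0 : R[i]) = 1.
Proof. by rewrite /cexp /= expR0 cos0 sin0 mul1r. Qed.

Lemma norm_cexp z : `|cexp z| = (expR (complex.Re z))%:C.
Proof.
rewrite normrM gtr0_norm ?ltcR ?expR_gt0 // normc_def /= cos2Dsin2 sqrtr1.
by rewrite mulr1.
Qed.

Lemma norm_cexp_taylor1_le z : `|z| <= 2^-1 -> `|cexp z - 1 - z| <= 3 * `|z| ^+ 2.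
Proof.
case: z => a b; rewrite -add_Re2_Im2 /= => z2.
have rho4 : a ^+ 2 + b ^+ 2 <= 4^-1.
  have half : (2^-1 : R[i]) = (2^-1)%:C by rewrite fmorphV rmorph_nat.
  move: z2; rewrite normc_def half lecR /=.
  have rho0 : 0 <= a ^+ 2 + b ^+ 2 by rewrite addr_ge0 ?sqr_ge0.
  by have := sqr_sqrtr rho0; have := sqrtr_ge0 (a ^+ 2 + b ^+ 2); nra.
have [a2 b2] : `|a| <= 2^-1 /\ `|b| <= 2^-1.
  rewrite !ler_norml; have := sqr_ge0 a; have := sqr_ge0 b.
  by split; apply/andP; split; nra.
have [E2 E1 E1a] := expR_taylor_bounds a2.
have ReE : complex.Re (cexp (a +i* b) - 1 - (a +i* b)) =
    (expR a - 1 - a) + expR a * (cos b - 1).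
  by rewrite /cexp /=; ring.
have ImE : complex.Im (cexp (a +i* b) - 1 - (a +i* b)) =
    (expR a - 1) * sin b + (sin b - b).
  by rewrite /cexp /=; ring.
set r := cexp _ - 1 - _.
have reB : `|complex.Re r| <= 2 * (a ^+ 2 + b ^+ 2).
  rewrite ReE; apply: (le_trans (ler_normD _ _)).
  rewrite normrM ger0_norm ?expR_ge0 //.
  by have := norm_cosB1_le b; have := expR_ge0 a; have := sqr_ge0 b; nra.
have imB : `|complex.Im r| <= 2 * (a ^+ 2 + b ^+ 2).
  have b1 : `|b| <= 1 by apply: le_trans b2 _; lra.
  rewrite ImE; apply: (le_trans (ler_normD _ _)); rewrite normrM.
  have := norm_sin_le b; have := norm_sinB_le b1.
  have := normr_ge0 (expR a - 1); have := normr_ge0 (sin b).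
  have := sqr_ge0 (`|a| - `|b|).
  rewrite -[a ^+ 2]real_normK ?num_real // -[b ^+ 2]real_normK ?num_real //.
  nra.
have bound_ge0 : 0 <= 3 * (a ^+ 2 + b ^+ 2) by rewrite mulr_ge0 ?addr_ge0 ?sqr_ge0.
have three : (3 : R[i]) = (3 : R)%:C by rewrite rmorph_nat.
rewrite three -rmorphM -[X in _ <= X]ger0_norm ?ler0c //.
apply: ler_normc => /=.
rewrite -[complex.Re r ^+ 2]real_normK ?num_real //.
rewrite -[complex.Im r ^+ 2]real_normK ?num_real //.
by have := normr_ge0 (complex.Re r); have := normr_ge0 (complex.Im r); nra.
Qed.

End ComplexBounds.

Lemma is_derive0_sqr_remainder (K : numFieldType) (g : K^o -> K^o) (d C : K) :
  0 <= C -> (\forall h \near 0, `|g h - g 0 - d * h| <= C * `|h| ^+ 2) ->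
  is_derive (0 : K^o) 1 g d.
Proof.
move=> C0 gr.
have L : (fun h : K^o => h^-1 *: ((g \o shift 0) (h *: 1) - g 0)) @ 0^' --> d.
  apply/cvgrPdist_le => e e0.
  have C1 : 0 < C + 1 by rewrite ltr_wpDl.
  near=> h.
  have h0 : h != 0 by near: h; exact: nbhs_dnbhs_neq.
  have he : `|h| <= e / (C + 1) by near: h; apply: dnbhs0_le; rewrite divr_gt0.
  have hr : `|g h - g 0 - d * h| <= C * `|h| ^+ 2 by near: h; exact: cvg_within.
  rewrite /= addr0 [_ *: 1]mulr1 [_ *: _]mulrC.
  have -> : d - (g h - g 0) * h^-1 = - ((g h - g 0 - d * h) / h) by field.
  rewrite normrN normrM normfV ler_pdivrMr ?normr_gt0 //.
  apply: (le_trans hr); rewrite expr2 mulrA ler_wpM2r //.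
  apply: (@le_trans _ _ ((C + 1) * `|h|)); first by rewrite ler_wpM2r // lerDl.
  by rewrite mulrC -ler_pdivlMr.
apply: DeriveDef; [exact: cvgP L | exact: cvg_lim L].
Unshelve. all: by end_near.
Qed.

Lemma is_derive0_cexpM (R : realType) (k : R[i]) :
  is_derive (0 : R[i]^o) 1 (fun s : R[i]^o => cexp (k * s) : R[i]^o) k.
Proof.
apply: (@is_derive0_sqr_remainder _ _ _ (3 * `|k| ^+ 2)).
  by rewrite mulr_ge0 ?exprn_ge0.
have k0 : (fun h : R[i]^o => (k * h : R[i]^o)) @ 0 --> (0 : R[i]^o).
  by have := @mulrl_continuous _ k 0; rewrite /continuous_at mulr0.
near=> h.
have kh : `|k * h| <= 2^-1.
  by near: h; apply: (cvgr0_norm_le _ k0); rewrite invr_gt0.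
rewrite mulr0 cexp0 -mulrA -exprMn -normrM.
exact: norm_cexp_taylor1_le.
Unshelve. all: by end_near.
Qed.

Section CharQuasipoly.
Variables (R : realType) (al be w m eps T : R).

Definition char_qpoly (s : R[i]) : R[i] :=
  (s + al%:C) * (s + be%:C) * (eps%:C * s + 1)
  - (al%:C - w%:C * s) * (be%:C - m%:C * s) * cexp (- T%:C * s).

Lemma char_qpoly0 : char_qpoly 0 = 0.
Proof. by rewrite /char_qpoly !mulr0 cexp0 !subr0 !add0r !mulr1 subrr. Qed.

Lemma is_derive0_char_qpoly :
  is_derive (0 : R[i]^o) 1 (char_qpoly : R[i]^o -> R[i]^o)
    ((al * (1 + m) + be * (1 + w) + al * be * (eps + T))%:C).
Proof.
have dE := is_derive0_cexpM (- T%:C).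
have -> : (char_qpoly : R[i]^o -> R[i]^o) =
    (id + cst al%:C) * (id + cst be%:C) * (cst eps%:C * id + cst 1)
    - (cst al%:C - cst w%:C * id) * (cst be%:C - cst m%:C * id)
      * (fun s => cexp (- T%:C * s)) by [].
have Did : is_derive (0 : R[i]^o) 1 id 1 := is_derive_id _ _.
have Dc (a : R[i]^o) : is_derive (0 : R[i]^o) 1 (cst a) 0 := is_derive_cst _ _ _.
have dP := is_deriveM
  (is_deriveM (is_deriveD Did (Dc al%:C)) (is_deriveD Did (Dc be%:C)))
  (is_deriveD (is_deriveM (Dc eps%:C) Did) (Dc 1)).
have dQ := is_deriveM
  (is_deriveM (is_deriveB (Dc al%:C) (is_deriveM (Dc w%:C) Did))
              (is_deriveB (Dc be%:C) (is_deriveM (Dc m%:C) Did))) dE.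
apply: is_derive_eq (is_deriveB dP dQ) _.
have scaleE (u v : R[i]^o) : u *: v = u * v by [].
rewrite /= !mulr0 cexp0 !scaleE !fctE /= !(rmorphD, rmorphM, rmorph1).
ring.
Qed.

Hypotheses (al_gt0 : 0 < al) (be_gt0 : 0 < be) (w_lt1 : `|w| < 1)
  (m_lt1 : `|m| < 1) (eps_ge0 : 0 <= eps) (T_ge0 : 0 <= T).

Lemma char_qpoly_simple_root0 :
  derivable (char_qpoly : R[i]^o -> R[i]^o) 0 1 /\
  'D_1 (char_qpoly : R[i]^o -> R[i]^o) 0 != 0.
Proof.
have D := is_derive0_char_qpoly.
split; first exact: ex_derive.
rewrite derive_val eq_complex /= negb_and eqxx orbF gt_eqF //.
have [w1 m1] : 0 < 1 + w /\ 0 < 1 + m.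
  by move: w_lt1 m_lt1; rewrite !ltr_norml; split; lra.
have := mulr_ge0 (ltW (mulr_gt0 al_gt0 be_gt0)) (addr_ge0 eps_ge0 T_ge0).
by have := mulr_gt0 al_gt0 m1; have := mulr_gt0 be_gt0 w1; lra.
Qed.

Lemma char_qpoly_neq0 (s : R[i]) :
  0 <= complex.Re s -> s != 0 -> char_qpoly s != 0.
Proof.
move=> x0 s0.
have ltA := norm_affine_lt al_gt0 w_lt1 x0 s0.
have ltB := norm_affine_lt be_gt0 m_lt1 x0 s0.
have geE := norm_scale_add1_ge1 eps_ge0 x0.
have leX : `|cexp (- T%:C * s)| <= 1.
  have ReTs : complex.Re (- T%:C * s) = - (T * complex.Re s).
    by case: (s) => x y /=; ring.
  by rewrite norm_cexp -[1]/(1%:C) lecR expR_le1 ReTs oppr_le0 mulr_ge0.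
rewrite /char_qpoly subr_eq0; set e := cexp _ in leX *; clearbody e.
apply/eqP => /(congr1 Num.norm); rewrite !normrM.
apply/eqP; rewrite gt_eqF //.
apply: (le_lt_trans (ler_piMr (mulr_ge0 (normr_ge0 _) (normr_ge0 _)) leX)).
apply: (lt_le_trans _ (ler_peMr (mulr_ge0 (normr_ge0 _) (normr_ge0 _)) geE)).
by rewrite ltr_pM.
Qed.

End CharQuasipoly.

(* The e^{-τ s} terms cancel in the determinant; only e^{-2τ s} survives. *)
Lemma chardetE (R : realType) (a0 a1 a2 a5 r2 r4 tau eps : R) (s : R[i]) :
  a0 != 0 -> a1 != a2 ->
  chardet a0 a1 a2 a5 r2 r4 tau eps s =
  char_qpoly (a1 * r2) ((a1 - a2) * r4 * a5) (a2 / (a1 - a2)) (a5 - 1)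
    eps (2 * tau) s.
Proof.
move=> a00 a12.
have e2 : cexp (- ((2 * tau)%:C * s)) = cexp (- (tau%:C * s)) ^+ 2.
  by rewrite expr2 -cexpD rmorphM rmorph_nat; congr cexp; ring.
rewrite /chardet /Delta /cmx /matE /matA /matB /matC /char_qpoly mulNr e2.
rewrite !map_mx3 !scale_mx3 !sub_mx3 det_mx3.
have a0C : a0%:C != 0 :> R[i] by rewrite eq_complex /= negb_and a00.
have a12C : a1%:C - a2%:C != 0 :> R[i].
  by rewrite subr_eq0 eq_complex /= negb_and a12.
rewrite !(rmorph0, rmorph1, rmorphN, rmorphM, rmorphB, fmorphV).
by field; rewrite a0C a12C.
Qed.

Lemma cc_gt0 (R : realType) (n th : R) : 0 < n -> 0 <= th < pi / 2 -> 0 < cc n th.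
Proof.
move=> n0 /andP[th0 th1]; rewrite /cc divr_gt0 // cos_gt0_pihalf // th1 andbT.
by apply: lt_le_trans th0; rewrite oppr_lt0 divr_gt0 ?pi_gt0.
Qed.

Lemma norm_divBD_lt1 (R : realType) (x y : R) : 0 < x -> 0 < y ->
  `|(x - y) / (x + y)| < 1.
Proof.
move=> x0 y0; have xy : 0 < x + y by rewrite addr_gt0.
rewrite normrM normfV (gtr0_norm xy) ltr_pdivrMr // mul1r ltr_norml.
by apply/andP; split; lra.
Qed.

Section Coefficients.
Variables (R : realType) (c1 c3 c5 : R).
Hypotheses (c1_gt0 : 0 < c1) (c3_gt0 : 0 < c3) (c5_gt0 : 0 < c5).

Lemma a1_gt0 : 0 < a1 c1 c3.
Proof.
(* [pi] is generalized: otherwise rewriting unfolds its definition. *)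
rewrite /a1; move: (@pi R) (pi_gt0 R) => p p_gt0.
by rewrite !(mulr_gt0, invr_gt0, addr_gt0).
Qed.

Lemma a1Ba2 : a1 c1 c3 - a2 c1 c3 = 2 * pi * c3.
Proof. by rewrite /a1 /a2; field; rewrite gt_eqF ?addr_gt0. Qed.

Lemma a1Ba2_gt0 : 0 < a1 c1 c3 - a2 c1 c3.
Proof. by rewrite a1Ba2; move: (@pi R) (pi_gt0 R) => p p_gt0; rewrite !mulr_gt0. Qed.

Lemma a2_div_a1Ba2 : a2 c1 c3 / (a1 c1 c3 - a2 c1 c3) = (c1 - c3) / (c1 + c3).
Proof.
rewrite a1Ba2 /a2; move: (@pi R) (pi_gt0 R) => p p_gt0.
by field; rewrite !gt_eqF ?addr_gt0.
Qed.

Lemma a5_gt0 : 0 < a5 c3 c5.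
Proof. by rewrite /a5 !(mulr_gt0, invr_gt0, addr_gt0). Qed.

Lemma a5B1 : a5 c3 c5 - 1 = (c5 - c3) / (c5 + c3).
Proof. by rewrite /a5; field; rewrite gt_eqF ?addr_gt0. Qed.

End Coefficients.

Theorem lemma1 (R : realType) (n1 n3 n5 th1 th3 th5 a0 r2 r4 tau : R) :
  0 < n1 -> 0 < n3 -> 0 < n5 ->
  0 <= th1 < pi / 2 -> 0 <= th3 < pi / 2 -> 0 <= th5 < pi / 2 ->
  n1 * sin th1 = n3 * sin th3 -> n3 * sin th3 = n5 * sin th5 ->
  0 < a0 -> 0 < r2 -> 0 < r4 -> 0 < tau ->
  let c1 := cc n1 th1 in let c3 := cc n3 th3 in let c5 := cc n5 th5 in
  let A1 := a1 c1 c3 in let A2 := a2 c1 c3 in let A5 := a5 c3 c5 in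
  forall eps : R, 0 <= eps ->
  let f : R[i]^o -> R[i]^o := chardet a0 A1 A2 A5 r2 r4 tau eps in
  (* (a) 0 is a root, and a simple one *)
  (f 0 = 0 /\ derivable f 0 1 /\ 'D_1 f 0 != 0) /\
  (* (b) every other root lies in the open left half-plane *)
  (forall lam : R[i], f lam = 0 -> lam != 0 -> complex.Re lam < 0).
Proof.
move=> n1_gt0 n3_gt0 n5_gt0 th1P th3P th5P _ _ a0_gt0 r2_gt0 r4_gt0 tau_gt0.
move=> c1 c3 c5 A1 A2 A5 eps eps_ge0 f.
have c1_gt0 : 0 < c1 := cc_gt0 n1_gt0 th1P.
have c3_gt0 : 0 < c3 := cc_gt0 n3_gt0 th3P.
have c5_gt0 : 0 < c5 := cc_gt0 n5_gt0 th5P.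
have A1_gt0 : 0 < A1 := a1_gt0 c1_gt0 c3_gt0.
have A12_gt0 : 0 < A1 - A2 := a1Ba2_gt0 c1_gt0 c3_gt0.
have A5_gt0 : 0 < A5 := a5_gt0 c3_gt0 c5_gt0.
have al_gt0 : 0 < A1 * r2 := mulr_gt0 A1_gt0 r2_gt0.
have be_gt0 : 0 < (A1 - A2) * r4 * A5 := mulr_gt0 (mulr_gt0 A12_gt0 r4_gt0) A5_gt0.
have fE : f = char_qpoly (A1 * r2) ((A1 - A2) * r4 * A5) (A2 / (A1 - A2))
    (A5 - 1) eps (2 * tau).
  by apply/funext => s; rewrite /f chardetE ?(gt_eqF a0_gt0) // -subr_eq0 gt_eqF.
have [w_lt1 m_lt1] := (norm_divBD_lt1 c1_gt0 c3_gt0, norm_divBD_lt1 c5_gt0 c3_gt0).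
rewrite -a2_div_a1Ba2 // -a5B1 // in w_lt1 m_lt1.
have T_ge0 : 0 <= 2 * tau by rewrite mulr_ge0 ?ltW.
rewrite fE; split; first by split; [exact: char_qpoly0 | exact: char_qpoly_simple_root0].
move=> lam root0 lam0; rewrite ltNge; apply/negP => Re_ge0.
by move: root0; apply/eqP; apply: char_qpoly_neq0.
Qed.
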